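(* Let $N\ge 2$, let $T_N$ be the homogeneous tree in which every vertex has degree $N$, and fix a root $o$. Let $m>1$ and assume either $(p,q)\in G_{5.1}=\{(p,q): p+q=m-1,\ p\ge0,\ q>0\}$, or $(p,q)\in G_{5.2}=\{(p,q): p+q=m-1,\ q<0\}$ with $1<m<3$. Then there exist $\lambda>0$ and a weight $\mu$ on $T_N$ such that $$W_o(n)\asymp e^{\lambda n}\quad\text{for } n\ge 2,$$ and the inequality $\Delta_m u+u^p|\nabla u|^q\le 0$ on $T_N$ admits a nontrivial positive solution.
   Context: A weight on a graph $(V,E)$ is a symmetric function $\mu:V\times V\to[0,\infty)$ with $\mu_{xy}=\mu_{yx}>0$ if and only if $x\sim y$ (adjacent); $\mu(x)=\sum_{y\sim x}\mu_{xy}$. For $m>1$, $\Delta_m u(x)=\frac{1}{\mu(x)}\sum_{y\sim x}\mu_{xy}|u(y)-u(x)|^{m-2}(u(y)-u(x))$ and $|\nabla u(x)|=\big(\sum_{y\sim x}\frac{\mu_{xy}}{2\mu(x)}(u(y)-u(x))^2\big)^{1/2}$. $d$ is the graph distance, $B(o,n)=\{x: d(o,x)\le n\}$, $W_o(n)=\sum_{x\in B(o,n),\,y\in V,\,d(o,x)<d(o,y)}\mu_{xy}$. $f(n)\asymp g(n)$ for $n\ge2$ means there are constants $c,C>0$ with $c\,g(n)\le f(n)\le C\,g(n)$ for all $n\ge 2$. A nontrivial positive solution is a non-constant $u:V\to(0,\infty)$ with $\Delta_m u(x)+u(x)^p|\nabla u(x)|^q\le0$ for all $x\in V$. *)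

From HB Require Import structures.
From mathcomp Require Import all_boot all_order all_algebra.
From mathcomp Require Import all_classical all_reals all_analysis.
Set Implicit Arguments. Unset Strict Implicit. Unset Printing Implicit Defensive.
Import Order.TTheory GRing.Theory Num.Theory.
Local Open Scope ring_scope.

(* A vertex is a word [a_1; ...; a_k] of naturals with a_1 < N and a_i < N-1
   for i >= 2.  The root o is the empty word; the children of the root are
   [:: a] (a < N), the children of a non-root word x are rcons x a (a < N-1);
   each vertex is adjacent to its children and to its parent.  Hence every
   vertex has degree N. *)
Definition validw (N : nat) (s : seq nat) : bool :=
  match s with
  | [::] => true
  | a :: t => (a < N)%N && all (fun b => b < N.-1)%N t
  end.

Definition child (x y : seq nat) : bool :=
  (size y == (size x).+1) && (take (size x) y == x).

Definition adj (N : nat) (x y : seq nat) : bool :=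
  [&& validw N x, validw N y & child x y || child y x].

Definition children (N : nat) (x : seq nat) : seq (seq nat) :=
  map (rcons x) (iota 0 (if x is [::] then N else N.-1)).

Definition nbrs (N : nat) (x : seq nat) : seq (seq nat) :=
  (if x is [::] then [::] else [:: take (size x).-1 x]) ++ children N x.

Fixpoint walkb (N : nat) (k : nat) (x y : seq nat) : bool :=
  match k with
  | 0 => x == y
  | k'.+1 => has (fun z => walkb N k' z y) (nbrs N x)
  end.

(* graph distance: the least k admitting a walk of length k
   (searched up to size x + size y, which always suffices in the tree) *)
Definition dist (N : nat) (x y : seq nat) : nat :=
  find (fun k => walkb N k x y) (iota 0 (size x + size y).+1).

Definition root : seq nat := [::].

Fixpoint words (N : nat) (k : nat) : seq (seq nat) :=
  match k with
  | 0 => [:: [::]]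
  | k'.+1 => flatten [seq children N x | x <- words N k']
  end.
Definition ballcand (N n : nat) : seq (seq nat) :=
  flatten [seq words N k | k <- iota 0 n.+1].

Section Weighted.
Variable R : realType.

Definition is_weight (N : nat) (mu : seq nat -> seq nat -> R) : Prop :=
  forall x y, validw N x -> validw N y ->
    [/\ mu x y = mu y x, 0 <= mu x y & (0 < mu x y <-> adj N x y)].

Definition muv (N : nat) (mu : seq nat -> seq nat -> R) (x : seq nat) : R :=
  \sum_(y <- nbrs N x) mu x y.

(* W_o(n) = sum_{x in B(o,n), y in V, d(o,x) < d(o,y)} mu_xy
   (mu_xy = 0 unless y ~ x, so y ranges over the neighbours of x) *)
Definition Wo (N : nat) (mu : seq nat -> seq nat -> R) (n : nat) : R :=
  \sum_(x <- ballcand N n | (dist N root x <= n)%N)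
    \sum_(y <- nbrs N x | (dist N root x < dist N root y)%N) mu x y.

Definition mlap (N : nat) (mu : seq nat -> seq nat -> R) (m : R)
    (u : seq nat -> R) (x : seq nat) : R :=
  (muv N mu x)^-1 *
    \sum_(y <- nbrs N x) mu x y * (`|u y - u x| `^ (m - 2)) * (u y - u x).

Definition gradn (N : nat) (mu : seq nat -> seq nat -> R)
    (u : seq nat -> R) (x : seq nat) : R :=
  Num.sqrt (\sum_(y <- nbrs N x)
              mu x y / (2 * muv N mu x) * (u y - u x) ^+ 2).

(* u is a nontrivial positive solution of Delta_m u + u^p |grad u|^q <= 0.
   When q < 0 and |grad u(x)| = 0 the term |grad u(x)|^q is +oo, so the
   inequality can only hold where |grad u(x)| > 0; this is required explicitly. *)
Definition nontriv_pos_sol (N : nat) (mu : seq nat -> seq nat -> R)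
    (m p q : R) (u : seq nat -> R) : Prop :=
  (forall x, validw N x -> 0 < u x) /\
  (exists x y, [/\ validw N x, validw N y & u x != u y]) /\
  (forall x, validw N x ->
     (q < 0 -> 0 < gradn N mu u x) /\
     mlap N mu m u x + (u x `^ p) * (gradn N mu u x `^ q) <= 0).

End Weighted.

From Pilot Require Import Defs.
From HB Require Import structures.
From mathcomp Require Import all_boot all_order all_algebra.
From mathcomp Require Import all_classical all_reals all_analysis.
From mathcomp Require Import ring lra zify.
Import Order.TTheory GRing.Theory Num.Theory.
Set Implicit Arguments. Unset Strict Implicit. Unset Printing Implicit Defensive.

(* Look at the tree from the end 0 0 0 ...: its Busemann function b drops by one
   along exactly one edge at each vertex and rises by one along the other N - 1.
   For the weight mu_xy = s^(min (b x) (b y)) and u = t^b, the m-Laplacian and the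
   gradient are therefore homogeneous: Delta_m u = u^(m-1) L(t, sg) and
   |grad u| = u G(t, sg) with sg = (N - 1) s, so when p + q = m - 1 the inequality
   reduces to the scalar condition L + G^q <= 0.  For q > 0 it holds for t large and
   sg small, since then G^q is about (1 - 1/t)^q 2^(-q/2) while L is about
   -(1 - 1/t)^(m-1); for q < 0 and m < 3 one makes sg t^2 large (so G^q is small)
   while sg t^(m-1) stays small.  The edges between spheres k and k + 1 weigh
   about s^-(k+1), the ray 0 0 ... 0 dominating, hence W_o(n) is comparable to
   s^-n and lambda = - ln s. *)

Section Tree.
Variable N : nat.

Definition nchildren (x : seq nat) : nat := if x is [::] then N else N.-1.

Lemma childrenE x : children N x = map (rcons x) (iota 0 (nchildren x)).
Proof. by []. Qed.

Lemma mem_children x y :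
  y \in children N x -> exists2 a, (a < nchildren x)%N & y = rcons x a.
Proof. by rewrite childrenE => /mapP[a]; rewrite mem_iota => /= ? ->; exists a. Qed.

Lemma nchildren_gt0 x : (1 < N)%N -> (0 < nchildren x)%N.
Proof. by case: x => //=; case: N => [|[]]. Qed.

Lemma children_first x : (1 < N)%N ->
  children N x = rcons x 0 :: [seq rcons x a | a <- index_iota 1 (nchildren x)].
Proof.
move=> /(nchildren_gt0 x); rewrite childrenE /index_iota.
by case: (nchildren x) => // c _; rewrite subn1.
Qed.

Lemma nbrs_rcons y b : nbrs N (rcons y b) = y :: children N (rcons y b).
Proof. by rewrite /nbrs size_rcons -cats1 take_size_cat //; case: y. Qed.

Lemma validw_rcons x a : validw N (rcons x a) = validw N x && (a < nchildren x)%N.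
Proof.
case: x => [|b t] /=; first by rewrite andbT.
by rewrite all_rcons; case: (b < N)%N; case: (a < N.-1)%N; case: all.
Qed.

Lemma validw_take k x : validw N x -> validw N (take k x).
Proof.
rewrite -{1}(cat_take_drop k x); case: (take k x) => [//|b t] /= /andP[-> ].
by rewrite all_cat => /andP[].
Qed.

Lemma adj_nbrs x y : validw N x -> y \in nbrs N x -> adj N x y.
Proof.
move=> vx; rewrite /nbrs mem_cat => /orP[|/mem_children[a ha ->]].
  case: x vx => [//|b t] vx; rewrite inE => /eqP ->.
  by rewrite /adj vx validw_take //= /child size_take /= ltnSn !eqxx orbT.
rewrite /adj vx validw_rcons vx ha /= /child size_rcons eqxx /=.
by rewrite -cats1 take_size_cat // eqxx.
Qed.

Lemma adjC x y : adj N x y = adj N y x.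
Proof. by rewrite /adj orbC; case: (validw N x); case: (validw N y). Qed.

Lemma walkb_size k x y : walkb N k x y -> (size y <= size x + k)%N.
Proof.
elim: k x => [|k IH] x /=; first by move/eqP ->; rewrite addn0.
move/hasP=> [z + /IH]; rewrite /nbrs mem_cat addnS => /orP[|/mem_children[a _ ->]].
  by case: x => [//|b t]; rewrite inE => /eqP ->; rewrite size_take /= ltnSn; lia.
by rewrite size_rcons addSn.
Qed.

Lemma walkb_snoc k x y z : walkb N k x y -> z \in nbrs N y -> walkb N k.+1 x z.
Proof.
elim: k x => [|k IH] x /=; first by move/eqP-> => yz; apply/hasP; exists z.
by move/hasP=> [w wx /IH wz] /wz zw; apply/hasP; exists w.
Qed.

Lemma walkb_root x : validw N x -> walkb N (size x) Defs.root x.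
Proof.
elim/last_ind: x => [//|y a IH]; rewrite validw_rcons size_rcons => /andP[vy ha].
apply: walkb_snoc (IH vy) _.
by rewrite /nbrs mem_cat childrenE map_f ?orbT // mem_iota.
Qed.

Lemma dist_root x : validw N x -> dist N Defs.root x = size x.
Proof.
move=> vx; rewrite /dist [size _]/= add0n -addn1 iotaD find_cat size_iota.
have -> : has (fun k => walkb N k Defs.root x) (iota 0 (size x)) = false.
  apply/negbTE/hasPn => k; rewrite mem_iota /= => kx.
  by apply/negP => /walkb_size; rewrite leqNgt kx.
by rewrite /= add0n walkb_root // addn0.
Qed.

Lemma mem_words k x : x \in words N k -> validw N x /\ size x = k.
Proof.
elim: k x => [|k IH] x /=; first by rewrite inE => /eqP ->.
move/flattenP=> [c /mapP[y /IH [vy sy] ->] /mem_children [a ha ->]].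
by rewrite validw_rcons vy ha size_rcons sy.
Qed.

End Tree.

Local Open Scope ring_scope.

Lemma sum_nbrs_farther N (V : nmodType) (F : seq nat -> V) x : validw N x ->
  \sum_(y <- nbrs N x | (dist N Defs.root x < dist N Defs.root y)%N) F y =
  \sum_(y <- children N x) F y.
Proof.
move=> vx; rewrite /nbrs big_cat /= [X in X + _]big1_seq ?add0r; last first.
  case: x vx => [|b t] vx y; first by rewrite in_nil andbF.
  case/andP=> + /[1!inE] /eqP yp; rewrite yp.
  by rewrite !dist_root ?validw_take // size_take /= ltnSn ltnNge leqnSn.
rewrite big_seq_cond [RHS]big_seq; apply: eq_bigl => y.
case yx: (y \in children N x) => //=; case/mem_children: yx => a ha ->.
by rewrite !dist_root ?validw_rcons ?vx ?ha // size_rcons ltnSn.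
Qed.

Lemma Wo_levels N (R : realType) (mu : seq nat -> seq nat -> R) n :
  Wo N mu n = \sum_(0 <= k < n.+1) \sum_(x <- words N k) \sum_(y <- children N x) mu x y.
Proof.
rewrite /Wo /ballcand big_flatten big_map /index_iota subn0 big_seq [RHS]big_seq.
apply: eq_bigr => k; rewrite mem_iota ltnS => /andP[_ kn].
rewrite big_seq_cond [RHS]big_seq; apply: eq_big => x.
  case xk: (x \in words N k) => //=.
  by case/mem_words: xk => vx sx; rewrite dist_root // sx.
by case/andP => /mem_words[vx _] _; rewrite sum_nbrs_farther.
Qed.

Definition all_zero (x : seq nat) : bool := all (pred1 0%N) x.

Definition zero_prefix (x : seq nat) : nat := find (predC1 0%N) x.

(* The Busemann function of the end 0 0 0 ..., normalised by b(o) = 0: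
   b x = d(x, 0^j) - j, where 0^j is the longest all-zero prefix of x. *)
Definition busemann (x : seq nat) : int := (size x)%:Z - 2 * (zero_prefix x)%:Z.

Lemma all_zero_rcons x a : all_zero (rcons x a) = all_zero x && (a == 0%N).
Proof. by rewrite /all_zero all_rcons andbC. Qed.

Lemma zero_prefix_rcons x a : zero_prefix (rcons x a) =
  if all_zero x && (a == 0%N) then (size x).+1 else zero_prefix x.
Proof.
rewrite /zero_prefix; elim: x => [|b t IH] /=; first by case: eqP.
by rewrite IH; case: eqP => //= _; case: ifP.
Qed.

Lemma zero_prefix_all_zero x : all_zero x -> zero_prefix x = size x.
Proof. by elim: x => [//|b t IH] /= /andP[/eqP -> /IH]; rewrite /zero_prefix /= => ->. Qed.

Lemma busemann_all_zero x : all_zero x -> busemann x = - (size x)%:Z.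
Proof. by move=> /zero_prefix_all_zero; rewrite /busemann => ->; lia. Qed.

Lemma busemann_rcons x a : busemann (rcons x a) =
  if all_zero x && (a == 0%N) then busemann x - 1 else busemann x + 1.
Proof.
rewrite /busemann zero_prefix_rcons size_rcons.
by case: ifP => [/andP[/zero_prefix_all_zero -> _]|_]; lia.
Qed.

Section BusemannSums.
Variables (N : nat) (V : nmodType).
Hypothesis N_gt1 : (1 < N)%N.

Lemma sum_children_busemann (F : int -> V) x :
  \sum_(y <- children N x) F (busemann y) =
  F (if all_zero x then busemann x - 1 else busemann x + 1) +
  F (busemann x + 1) *+ (nchildren N x - 1).
Proof.
rewrite children_first // big_cons busemann_rcons eqxx andbT big_map.
congr (_ + _); rewrite -sumr_const_nat; apply: eq_big_nat => a /andP[a_gt0 _].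
by rewrite busemann_rcons (negbTE (lt0n_neq0 a_gt0)) andbF.
Qed.

Lemma sum_nbrs_busemann (F : int -> V) x :
  \sum_(y <- nbrs N x) F (busemann y) = F (busemann x - 1) + F (busemann x + 1) *+ N.-1.
Proof.
case/lastP: x => [|y c].
  by rewrite /nbrs cat0s sum_children_busemann /= subn1.
have N1 : N.-1 = (N.-1 - 1).+1 by lia.
rewrite nbrs_rcons big_cons sum_children_busemann.
have -> : nchildren N (rcons y c) = N.-1 by case: y.
have -> : busemann y = if all_zero (rcons y c) then busemann (rcons y c) + 1
                       else busemann (rcons y c) - 1.
  by rewrite busemann_rcons all_zero_rcons; case: (_ && _); rewrite ?subrK ?addrK.
rewrite {2}N1 mulrS.
by case: ifP => _; rewrite // addrCA.
Qed.

End BusemannSums.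

Lemma sum_all_zero_words (V : nmodType) N (f : seq nat -> V) k : (1 < N)%N ->
  \sum_(x <- words N k | all_zero x) f x = f (nseq k 0%N).
Proof.
move=> N_gt1; elim: k f => [|k IH] f; first by rewrite /= big_cons big_nil addr0.
have -> : nseq k.+1 0%N = rcons (nseq k 0%N) 0%N by rewrite -cats1 -(nseqD k 1) addn1.
rewrite [words _ _]/= big_flatten big_map -(IH (fun x => f (rcons x 0%N))) [RHS]big_mkcond.
apply: eq_bigr => x _; rewrite children_first // big_cons all_zero_rcons eqxx andbT.
rewrite big_map big1_seq /= ?addr0 // => a /andP[].
by rewrite all_zero_rcons mem_index_iota => /andP[_ /eqP->].
Qed.

Section BusemannBounds.
Variables (N : nat) (R : numDomainType).
Hypothesis N_gt1 : (1 < N)%N.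

Lemma sum_children_busemann_ge (F : int -> R) x : (forall z, 0 <= F z) ->
  (if all_zero x then F (busemann x - 1) else 0) <= \sum_(y <- children N x) F (busemann y).
Proof.
move=> F_ge0; rewrite sum_children_busemann //.
by case: ifP => _; rewrite ?lerDl ?addr_ge0 ?mulrn_wge0.
Qed.

Lemma sum_children_busemann_le (F : int -> R) x : (forall z, 0 <= F z) ->
  \sum_(y <- children N x) F (busemann y) <=
  (if all_zero x then F (busemann x - 1) else 0) + F (busemann x + 1) *+ N.
Proof.
move=> F_ge0; rewrite sum_children_busemann //.
have c_gt0 := nchildren_gt0 x N_gt1.
have cN : (nchildren N x <= N)%N by case: x {c_gt0} => //=; lia.
case: ifP => _; first by rewrite lerD2l ler_wpMn2l //; lia.
by rewrite add0r -mulrS ler_wpMn2l //; lia.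
Qed.

End BusemannBounds.

Lemma min_subr1 (R : realDomainType) (b : R) : Num.min b (b - 1) = b - 1.
Proof. by rewrite min_r // gerBl. Qed.

Lemma min_addr1 (R : realDomainType) (b : R) : Num.min b (b + 1) = b.
Proof. by rewrite min_l // lerDl. Qed.

Section HoroWeight.
Variables (R : realType) (N : nat) (s : R).
Hypotheses (N_gt1 : (1 < N)%N) (s_gt0 : 0 < s).

Definition horo_weight (x y : seq nat) : R :=
  if adj N x y then s ^ Num.min (busemann x) (busemann y) else 0.

Lemma horo_weight_is_weight : is_weight N horo_weight.
Proof.
move=> x y _ _; rewrite /horo_weight adjC minC; split => //.
  by case: adj => //; rewrite ltW ?exprz_gt0.
by case: adj; rewrite ?exprz_gt0 ?ltxx.
Qed.

Lemma horo_weight_nbrs x y : validw N x -> y \in nbrs N x ->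
  horo_weight x y = s ^ Num.min (busemann x) (busemann y).
Proof. by move=> vx /(adj_nbrs vx); rewrite /horo_weight => ->. Qed.

Lemma sum_nbrs_horo_weight (G : int -> R) x : validw N x ->
  \sum_(y <- nbrs N x) horo_weight x y * G (busemann y) =
  s ^ (busemann x - 1) * (G (busemann x - 1) + (s * G (busemann x + 1)) *+ N.-1).
Proof.
move=> vx.
rewrite (eq_big_seq (fun y => s ^ Num.min (busemann x) (busemann y) * G (busemann y))).
  rewrite (sum_nbrs_busemann N_gt1 (fun z => s ^ Num.min (busemann x) z * G z)).
  rewrite min_subr1 min_addr1.
  have -> : s ^ busemann x = s ^ (busemann x - 1) * s.
    by rewrite -[in LHS](subrK 1 (busemann x)) expfzDr ?gt_eqF // expr1z.
  by rewrite mulrDr mulrnAr mulrA.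
by move=> y /(horo_weight_nbrs vx) ->.
Qed.

End HoroWeight.

Lemma sum_expr_le_twice (R : realFieldType) (r : R) n : 2 <= r ->
  \sum_(0 <= k < n.+1) r ^+ k <= 2 * r ^+ n.
Proof.
move=> r_ge2; elim: n => [|n IH]; first by rewrite big_nat1 expr0; lra.
have rn_ge0 : 0 <= r ^+ n by rewrite exprn_ge0 // (le_trans _ r_ge2).
by rewrite big_nat_recr //= exprS; nra.
Qed.

Section Volume.
Variables (R : realType) (N : nat) (s : R).
Hypotheses (N_gt1 : (1 < N)%N) (s_gt0 : 0 < s).

Local Notation mu := (horo_weight N s).

Definition level_weight (k : nat) : R :=
  \sum_(x <- words N k) \sum_(y <- children N x) mu x y.

Definition level_mass (k : nat) : R := \sum_(x <- words N k) s ^ busemann x.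

Lemma expr_busemann_nseq k : s ^ (busemann (nseq k 0%N) - 1) = s^-1 ^+ k.+1.
Proof.
rewrite busemann_all_zero ?size_nseq; last exact: all_pred1_nseq.
by rewrite (_ : _ - 1 = - (k.+1)%:Z) -?exprz_inv //; lia.
Qed.

Lemma sum_children_horo_weight_bounds x : validw N x ->
  let zero_term := if all_zero x then s ^ (busemann x - 1) else 0 in
  zero_term <= \sum_(y <- children N x) mu x y <= zero_term + N%:R * s ^ busemann x.
Proof.
move=> vx /=.
rewrite (eq_big_seq (fun y => s ^ Num.min (busemann x) (busemann y))) => [|y yx]; last first.
  by apply: horo_weight_nbrs; rewrite // /nbrs mem_cat yx orbT.
have G_ge0 z : 0 <= s ^ Num.min (busemann x) z by rewrite ltW ?exprz_gt0.
have := sum_children_busemann_ge N_gt1 (F := fun z => s ^ Num.min (busemann x) z) x G_ge0.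
have := sum_children_busemann_le N_gt1 (F := fun z => s ^ Num.min (busemann x) z) x G_ge0.
by rewrite /= min_subr1 min_addr1 mulr_natl => -> ->.
Qed.

Lemma level_weight_ge k : s^-1 ^+ k.+1 <= level_weight k.
Proof.
rewrite -expr_busemann_nseq -(sum_all_zero_words (fun x => s ^ (busemann x - 1)) k N_gt1).
rewrite big_mkcond big_seq [X in _ <= X]big_seq; apply: ler_sum => x /mem_words[vx _].
by case/andP: (sum_children_horo_weight_bounds vx).
Qed.

Lemma level_weight_le k : level_weight k <= s^-1 ^+ k.+1 + N%:R * level_mass k.
Proof.
rewrite -expr_busemann_nseq -(sum_all_zero_words (fun x => s ^ (busemann x - 1)) k N_gt1).
rewrite big_mkcond /level_mass /level_weight mulr_sumr -big_split big_seq [X in _ <= X]big_seq.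
by apply: ler_sum => x /mem_words[vx _]; case/andP: (sum_children_horo_weight_bounds vx).
Qed.

Lemma level_massS k : level_mass k.+1 <= s^-1 ^+ k.+1 + N%:R * s * level_mass k.
Proof.
rewrite -expr_busemann_nseq -(sum_all_zero_words (fun x => s ^ (busemann x - 1)) k N_gt1).
rewrite /level_mass [words _ _]/= big_flatten big_map /= mulr_sumr.
rewrite [\sum_(x <- _ | all_zero x) _]big_mkcond -big_split.
apply: ler_sum => x _.
apply: le_trans (sum_children_busemann_le N_gt1 (F := fun z => s ^ z) x _) _.
  by move=> z; rewrite ltW ?exprz_gt0.
by rewrite lerD2l expfzDr ?gt_eqF // expr1z -mulr_natr; lra.
Qed.

Hypothesis s_small : 2 * N%:R * s <= 1.

Lemma inv_s_ge : 2 * N%:R <= s^-1.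
Proof. by rewrite -div1r ler_pdivlMr. Qed.

Lemma inv_s_ge2 : 2 <= s^-1.
Proof.
have N_ge2 : (2 : R) <= N%:R by rewrite (ler_nat _ 2).
by have := inv_s_ge; lra.
Qed.

Lemma level_mass_le k : level_mass k <= 2 * s^-1 ^+ k.
Proof.
elim: k => [|k IH].
  by rewrite /level_mass /= big_cons big_nil addr0 expr0 expr0z; lra.
apply: le_trans (level_massS k) _.
have rk_ge0 : 0 <= s^-1 ^+ k by rewrite exprn_ge0 // invr_ge0 ltW.
have r_ge1 : 1 <= s^-1 by have := inv_s_ge2; lra.
have Ns_ge0 : 0 <= N%:R * s by rewrite mulr_ge0 // ltW.
have := ler_wpM2l Ns_ge0 IH; have := ler_wpM2r rk_ge0 s_small.
have := ler_wpM2r rk_ge0 r_ge1; rewrite exprS; lra.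
Qed.

Lemma level_weight_le_twice k : level_weight k <= 2 * s^-1 ^+ k.+1.
Proof.
apply: le_trans (level_weight_le k) _.
have := ler_wpM2l (ler0n R N) (level_mass_le k).
have rk_ge0 : 0 <= s^-1 ^+ k by rewrite exprn_ge0 // invr_ge0 ltW.
have := inv_s_ge; rewrite exprS; nra.
Qed.

Lemma Wo_horo_weight_bounds n :
  s^-1 ^+ n.+1 <= Wo N mu n <= 4 * s^-1 ^+ n.+1.
Proof.
have -> : Wo N mu n = \sum_(0 <= k < n.+1) level_weight k := Wo_levels N mu n.
have lw_ge0 k : 0 <= level_weight k.
  by apply: le_trans (level_weight_ge k); rewrite exprn_ge0 // invr_ge0 ltW.
apply/andP; split.
  apply: le_trans (level_weight_ge n) _.
  by rewrite big_nat_recr //= lerDr sumr_ge0.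
apply: le_trans (ler_sum_nat (fun k _ => level_weight_le_twice k)) _.
rewrite -mulr_sumr (eq_bigr (fun k => s^-1 * s^-1 ^+ k)) => [|k _]; last exact: exprS.
rewrite -mulr_sumr exprS.
have r_ge0 : 0 <= s^-1 by rewrite invr_ge0 ltW.
have := ler_wpM2l r_ge0 (sum_expr_le_twice n inv_s_ge2); lra.
Qed.

End Volume.

Lemma norm_powR_mul_pos (R : realType) (m y : R) : 0 < y ->
  `|y| `^ (m - 2) * y = y `^ (m - 1).
Proof.
move=> y_gt0; rewrite ger0_norm ?ltW // -{2}(powRr1 (ltW y_gt0)) -powRD.
  by congr (_ `^ _); ring.
by rewrite (gt_eqF y_gt0) implybT.
Qed.

Lemma norm_powR_mul_neg (R : realType) (m y : R) : 0 < y ->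
  `|- y| `^ (m - 2) * (- y) = - y `^ (m - 1).
Proof. by move=> y_gt0; rewrite normrN mulrN norm_powR_mul_pos. Qed.

Definition lap_ratio (R : realType) (m t sg : R) : R :=
  (- (1 - t^-1) `^ (m - 1) + sg * (t - 1) `^ (m - 1)) / (1 + sg).

Definition grad_ratio (R : realType) (t sg : R) : R :=
  Num.sqrt (((1 - t^-1) ^+ 2 + sg * (t - 1) ^+ 2) / (2 * (1 + sg))).

Section PowerSolution.
Variables (R : realType) (N : nat) (s t m : R).
Hypotheses (N_gt1 : (1 < N)%N) (s_gt0 : 0 < s) (t_gt1 : 1 < t).

Local Notation mu := (horo_weight N s).
Local Notation sg := (N.-1%:R * s).

Definition horo_power (x : seq nat) : R := t ^ busemann x.

Lemma t_gt0 : 0 < t. Proof. exact: lt_trans t_gt1. Qed.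

Lemma horo_power_gt0 x : 0 < horo_power x. Proof. exact: exprz_gt0 t_gt0. Qed.

Lemma sg_ge0 : 0 <= sg. Proof. by rewrite mulr_ge0 ?ler0n ?ltW. Qed.

Lemma sg_add1_gt0 : 0 < 1 + sg.
Proof. by rewrite ltr_pwDl ?sg_ge0. Qed.

Lemma horo_power_step_down x :
  t ^ (busemann x - 1) - horo_power x = - (horo_power x * (1 - t^-1)).
Proof. by rewrite /horo_power expfzDr ?gt_eqF ?t_gt0 // exprN1; ring. Qed.

Lemma horo_power_step_up x : t ^ (busemann x + 1) - horo_power x = horo_power x * (t - 1).
Proof. by rewrite /horo_power expfzDr ?gt_eqF ?t_gt0 // expr1z; ring. Qed.

Lemma muv_horo_weight x : validw N x -> muv N mu x = s ^ (busemann x - 1) * (1 + sg).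
Proof.
move=> vx; have := sum_nbrs_horo_weight N_gt1 s_gt0 (fun _ => 1) vx.
rewrite /muv; under eq_bigr do rewrite mulr1; move=> ->.
by rewrite !mulr1 -mulr_natl.
Qed.

Lemma one_sub_inv_gt0 : 0 < 1 - t^-1.
Proof. by rewrite subr_gt0 invf_lt1 // t_gt0. Qed.

Lemma mlap_horo_power x : validw N x ->
  mlap N mu m horo_power x = horo_power x `^ (m - 1) * lap_ratio m t sg.
Proof.
move=> vx; rewrite /mlap muv_horo_weight //; under eq_bigr do rewrite -mulrA.
rewrite (sum_nbrs_horo_weight N_gt1 s_gt0
  (fun z => `|t ^ z - horo_power x| `^ (m - 2) * (t ^ z - horo_power x)) vx).
rewrite horo_power_step_down horo_power_step_up.
rewrite norm_powR_mul_neg ?mulr_gt0 ?horo_power_gt0 ?one_sub_inv_gt0 //.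
rewrite norm_powR_mul_pos ?mulr_gt0 ?horo_power_gt0 ?subr_gt0 //.
rewrite !powRM ?ltW ?horo_power_gt0 ?one_sub_inv_gt0 ?subr_gt0 // /lap_ratio -mulr_natl.
by field; rewrite !gt_eqF ?exprz_gt0 ?sg_add1_gt0.
Qed.

Lemma gradn_horo_power x : validw N x ->
  gradn N mu horo_power x = horo_power x * grad_ratio t sg.
Proof.
move=> vx; rewrite /gradn /grad_ratio.
under eq_bigr do rewrite mulrAC -mulrA.
rewrite (sum_nbrs_horo_weight N_gt1 s_gt0
  (fun z => (t ^ z - horo_power x) ^+ 2 / (2 * muv N mu x)) vx).
rewrite horo_power_step_down horo_power_step_up muv_horo_weight // -[_ *+ N.-1]mulr_natl.
rewrite -[horo_power x in RHS]gtr0_norm ?horo_power_gt0 // -sqrtr_sqr -sqrtrM ?sqr_ge0 //.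
by congr Num.sqrt; field; rewrite !gt_eqF ?exprz_gt0 ?sg_add1_gt0 ?t_gt0.
Qed.

Lemma grad_ratio_gt0 : 0 < grad_ratio t sg.
Proof.
rewrite sqrtr_gt0 divr_gt0 ?mulr_gt0 ?sg_add1_gt0 // ltr_pwDl ?exprn_gt0 ?one_sub_inv_gt0 //.
by rewrite mulr_ge0 ?sg_ge0 ?sqr_ge0.
Qed.

Lemma horo_power_solution p q : p + q = m - 1 ->
  lap_ratio m t sg + grad_ratio t sg `^ q <= 0 ->
  nontriv_pos_sol N mu m p q horo_power.
Proof.
move=> pq ratio_le0; split; first by move=> x _; exact: horo_power_gt0.
split.
  exists [::], [:: 1%N]; split => //; first by rewrite /= N_gt1.
  by rewrite /horo_power /busemann /zero_prefix /= expr0z expr1z lt_eqF.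
move=> x vx; rewrite gradn_horo_power // mlap_horo_power //; split.
  by move=> _; rewrite mulr_gt0 ?horo_power_gt0 ?grad_ratio_gt0.
have u_gt0 := horo_power_gt0 x.
rewrite (powRM _ (ltW u_gt0) (ltW grad_ratio_gt0)) mulrA -powRD; last first.
  by rewrite (gt_eqF u_gt0) implybT.
by rewrite pq -mulrDr; apply: mulr_ge0_le0; rewrite ?powR_ge0.
Qed.

End PowerSolution.

Section RatioBounds.
Variables (R : realType) (m q : R).

Lemma subr1_mulr (t : R) : 0 < t -> t - 1 = t * (1 - t^-1).
Proof. by move=> t_gt0; rewrite mulrBr mulfV ?gt_eqF // mulr1. Qed.

Definition grad_factor (t sg : R) : R := Num.sqrt ((1 + sg * t ^+ 2) / (2 * (1 + sg))).

Lemma lap_ratioE (t sg : R) : 1 < t ->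
  lap_ratio m t sg = (1 - t^-1) `^ (m - 1) * (sg * t `^ (m - 1) - 1) / (1 + sg).
Proof.
move=> t_gt1; have t_gt0 : 0 < t by exact: lt_trans t_gt1.
have a_gt0 : 0 < 1 - t^-1 by rewrite subr_gt0 invf_lt1.
by rewrite /lap_ratio (subr1_mulr t_gt0) powRM ?ltW //; congr (_ / _); ring.
Qed.

Lemma grad_ratioE (t sg : R) : 1 < t -> 0 <= sg ->
  grad_ratio t sg = (1 - t^-1) * grad_factor t sg.
Proof.
move=> t_gt1 sg_ge0; have t_gt0 : 0 < t by exact: lt_trans t_gt1.
have a_gt0 : 0 < 1 - t^-1 by rewrite subr_gt0 invf_lt1.
rewrite /grad_ratio /grad_factor (subr1_mulr t_gt0) -[in RHS](gtr0_norm a_gt0).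
rewrite -sqrtr_sqr -sqrtrM ?sqr_ge0 //.
by congr Num.sqrt; field; rewrite !gt_eqF // ltr_pwDl.
Qed.

Lemma powR_lt1 (x r : R) : 0 <= x < 1 -> 0 < r -> x `^ r < 1.
Proof.
move=> /andP[x_ge0 x_lt1] r_gt0; have <- : (1 : R) `^ r = 1 by rewrite powR1.
by rewrite gt0_ltr_powR ?nnegrE.
Qed.

Lemma exists_powR_ge (p c : R) : 0 <= p -> 0 < c < 1 ->
  exists a, [/\ 0 < a, a < 1 & c <= a `^ p].
Proof.
move=> p_ge0 /andP[c_gt0 c_lt1]; have p1_gt0 : 0 < p + 1 by lra.
exists (c `^ (p + 1)^-1); split; first exact: powR_gt0.
  by rewrite powR_lt1 ?invr_gt0 // ltW ?c_gt0.
rewrite -powRrM; apply: ger1_powR; first by rewrite c_gt0 ltW.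
by rewrite ler_pdivrMl //; lra.
Qed.

Lemma grad_factor_le (t sg : R) : 0 <= sg -> sg * t ^+ 2 <= 1/8 -> grad_factor t sg <= 3/4.
Proof.
move=> sg_ge0 sgt; rewrite /grad_factor.
have -> : (3/4 : R) = Num.sqrt ((3/4) ^+ 2) by rewrite sqrtr_sqr ger0_norm //; lra.
by rewrite ler_sqrt ?exprn_ge0 // ler_pdivrMr; lra.
Qed.

Lemma exists_small_weight (eps t T : R) : 0 < eps -> 0 <= T ->
  exists sg, [/\ 0 < sg, sg * t ^+ 2 <= eps & sg * (1 + T) <= eps].
Proof.
move=> eps_gt0 T_ge0; have D_gt0 : 0 < 1 + t ^+ 2 + T by have := sqr_ge0 t; lra.
exists (eps / (1 + t ^+ 2 + T)); split; first by rewrite divr_gt0.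
  by rewrite mulrAC ler_pdivrMr // ler_pM2l //; lra.
by rewrite mulrAC ler_pdivrMr // ler_pM2l //; have := sqr_ge0 t; lra.
Qed.

Lemma exists_lap_grad_le0_q_gt0 (p : R) : p + q = m - 1 -> 0 <= p -> 0 < q ->
  exists t sg, [/\ 1 < t, 0 < sg, sg <= 1/8 & lap_ratio m t sg + grad_ratio t sg `^ q <= 0].
Proof.
move=> pq p_ge0 q_gt0.
set th := (3/4 : R) `^ q.
have th_gt0 : 0 < th by rewrite powR_gt0.
have th_lt1 : th < 1 by rewrite powR_lt1 //; lra.
have [a [a_gt0 a_lt1 th_le]] : exists a, [/\ 0 < a, a < 1 & (1 + th) / 2 <= a `^ p].
  by apply: exists_powR_ge => //; apply/andP; split; lra.
set t := (1 - a)^-1.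
have t_gt1 : 1 < t by rewrite invf_gt1; lra.
have a_eq : 1 - t^-1 = a by rewrite invrK; ring.
set T := t `^ (m - 1); have T_ge0 : 0 <= T := powR_ge0 t (m - 1).
have eps_gt0 : 0 < Num.min (1/8 : R) ((1 - th) / 4) by rewrite lt_min; apply/andP; split; lra.
have [sg [sg_gt0 +]] := exists_small_weight t eps_gt0 T_ge0.
rewrite !le_min => /andP[sgt _] /andP[sg1T sgT].
have sgT_ge0 : 0 <= sg * T := mulr_ge0 (ltW sg_gt0) T_ge0.
exists t, sg; split => //; first nra.
rewrite lap_ratioE // (grad_ratioE t_gt1 (ltW sg_gt0)) a_eq -/T.
set Q := grad_factor t sg; have Q_le : Q <= 3/4 := grad_factor_le (ltW sg_gt0) sgt.
have Qq_le : Q `^ q <= th.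
  by rewrite /th; apply: (ge0_ler_powR (ltW q_gt0)); rewrite ?nnegrE ?sqrtr_ge0 //; lra.
have th_sg : th * (1 + sg) <= a `^ p * (1 - sg * T).
  have sgT_le1 : 0 <= 1 - sg * T by nra.
  have := ler_wpM2r sgT_le1 th_le; nra.
rewrite (powRM _ (ltW a_gt0) (sqrtr_ge0 _)) -pq powRD ?(gt_eqF a_gt0) ?implybT //.
have -> : a `^ p * a `^ q * (sg * T - 1) / (1 + sg) + a `^ q * Q `^ q =
  a `^ q * (Q `^ q - a `^ p * (1 - sg * T) / (1 + sg)).
  by field; rewrite gt_eqF //; lra.
rewrite pmulr_rle0 ?powR_gt0 // subr_le0 ler_pdivlMr; last lra.
by apply: le_trans th_sg; rewrite ler_wpM2r //; lra.
Qed.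

Lemma le0_ger_powR (r x y : R) : r <= 0 -> 0 < x -> x <= y -> y `^ r <= x `^ r.
Proof.
move=> r_le0 x_gt0 xy; have y_gt0 := lt_le_trans x_gt0 xy.
have [r' r'_ge0 ->] : exists2 r', 0 <= r' & r = - r'.
  by exists (- r); rewrite ?opprK // oppr_ge0.
rewrite !powRN lef_pV2 ?posrE ?powR_gt0 //.
by rewrite ge0_ler_powR // nnegrE ltW.
Qed.

Lemma powR_ge_quarter (a r : R) : 1/2 <= a <= 1 -> 0 <= r <= 2 -> 1/4 <= a `^ r.
Proof.
move=> /andP[a_ge a_le1] /andP[r_ge0 r_le2].
have half_le : (1/2 : R) `^ r <= a `^ r by rewrite ge0_ler_powR ?nnegrE //; lra.
have : (1/2 : R) `^ 2 <= (1/2) `^ r by rewrite ger_powR //; apply/andP; split; lra.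
by rewrite -[2]/(2%:R) powR_mulrn; lra.
Qed.

Lemma lap_ratio_le (t sg : R) : 2 <= t -> 1 < m < 3 -> 0 <= sg <= 1/8 ->
  sg * t `^ (m - 1) <= 1/8 -> lap_ratio m t sg <= - (7/36).
Proof.
move=> t_ge2 /andP[m_gt1 m_lt3] /andP[sg_ge0 sg_le] sgT.
have t_inv : t^-1 <= 1/2 by rewrite -div1r ler_pdivrMr; lra.
have t_inv_gt0 : 0 < t^-1 by rewrite invr_gt0; lra.
have A_ge : 1/4 <= (1 - t^-1) `^ (m - 1) by apply: powR_ge_quarter; apply/andP; split; lra.
rewrite lap_ratioE; last lra.
by rewrite ler_pdivrMr; nra.
Qed.

Lemma grad_ratio_ge (t sg : R) : 2 <= t -> 0 <= sg <= 1/8 ->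
  Num.sqrt ((1 + sg * t ^+ 2) / 9) <= grad_ratio t sg.
Proof.
move=> t_ge2 /andP[sg_ge0 sg_le]; have t_gt0 : 0 < t by lra.
have t_inv : t^-1 <= 1/2 by rewrite -div1r ler_pdivrMr; lra.
have t_inv_gt0 : 0 < t^-1 by rewrite invr_gt0.
have a_ge : 1/4 <= (1 - t^-1) ^+ 2 by rewrite expr2; nra.
rewrite /grad_ratio ler_sqrt; last by rewrite divr_ge0 ?addr_ge0 ?mulr_ge0 ?sqr_ge0 //; lra.
rewrite (subr1_mulr t_gt0) exprMn ler_pdivlMr; last lra.
have K_ge0 : 0 <= sg * t ^+ 2 by rewrite mulr_ge0 ?sqr_ge0.
set A := (1 - t^-1) ^+ 2 in a_ge *; set K := sg * t ^+ 2 in K_ge0 *.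
have -> : A + sg * (t ^+ 2 * A) = A * (1 + K) by rewrite /K; ring.
have K1_ge0 := addr_ge0 ler01 K_ge0.
by have := ler_wpM2r K1_ge0 a_ge; have := ler_wpM2r K1_ge0 sg_le; lra.
Qed.

Lemma exists_t_sg_small (K : R) : 0 < K -> m < 3 ->
  exists t sg, [/\ 2 <= t, 0 < sg, sg <= 1/8, sg * t ^+ 2 = K & sg * t `^ (m - 1) <= 1/8].
Proof.
move=> K_gt0 m_lt3; set tau := (8 * K) `^ (3 - m)^-1; set t := 2 + 8 * K + tau.
have tau_ge0 : 0 <= tau by exact: powR_ge0.
have t_ge2 : 2 <= t by rewrite /t; lra.
have t_gt0 : 0 < t by lra.
have t_ge : 8 * K + 2 <= t by rewrite /t; lra.
have t_sq : 8 * K <= t ^+ 2.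
  have t_ge0 : 0 <= t by lra.
  by have := ler_wpM2r t_ge0 t_ge2; rewrite expr2; lra.
have t2_gt0 : 0 < t ^+ 2 by rewrite exprn_gt0 //; lra.
have tau_pow : tau `^ (3 - m) = 8 * K.
  by rewrite /tau -powRrM mulVf ?powRr1 ?gt_eqF //; lra.
have t_pow : 8 * K <= t `^ (3 - m).
  by rewrite -tau_pow ge0_ler_powR ?nnegrE //; rewrite /t; lra.
have t_powE : t `^ (m - 1) = (t `^ (3 - m))^-1 * t ^+ 2.
  rewrite -powRN -[t ^+ 2]powR_mulrn; last lra.
  rewrite -powRD; first by congr (_ `^ _); ring.
  by rewrite (gt_eqF t_gt0) implybT.
exists t; exists (K / t ^+ 2); split => //.
- by rewrite divr_gt0.
- by rewrite ler_pdivrMr //; lra.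
- by rewrite divfK ?gt_eqF.
have P_gt0 : 0 < t `^ (3 - m) by rewrite powR_gt0.
have -> : K / t ^+ 2 * t `^ (m - 1) = K / t `^ (3 - m).
  by rewrite t_powE; field; rewrite !gt_eqF.
by rewrite ler_pdivrMr //; lra.
Qed.

Lemma exists_lap_grad_le0_q_lt0 : 1 < m -> q < 0 -> m < 3 ->
  exists t sg, [/\ 1 < t, 0 < sg, sg <= 1/8 & lap_ratio m t sg + grad_ratio t sg `^ q <= 0].
Proof.
move=> m_gt1 q_lt0 m_lt3; set Ga := (16 : R) `^ (- 2 / q).
have Ga_ge1 : 1 <= Ga.
  rewrite -(powRr0 16); apply: ler_powR; first lra.
  by apply: mulr_le0; [lra | rewrite invr_le0 ltW].
have K_gt0 : 0 < 9 * Ga - 1 by lra.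
have [t [sg [t_ge2 sg_gt0 sg_le sgt sgT]]] := exists_t_sg_small K_gt0 m_lt3.
exists t, sg; split => //; first lra.
have m_bounds : 1 < m < 3 by apply/andP.
have sg_bounds : 0 <= sg <= 1/8 by rewrite sg_le ltW.
have lap_le := lap_ratio_le t_ge2 m_bounds sg_bounds sgT.
have grad_ge := grad_ratio_ge t_ge2 sg_bounds.
rewrite sgt (_ : (1 + (9 * Ga - 1)) / 9 = Ga) in grad_ge; last by field.
have Ga_pow : Num.sqrt Ga `^ q = 1/16.
  rewrite -powR12_sqrt ?(le_trans ler01) // -!powRrM.
  have -> : - 2 / q * (2^-1 * q) = -1 by field; rewrite lt_eqF.
  by rewrite powR_inv1 //; lra.
have sqrtGa_gt0 : 0 < Num.sqrt Ga by rewrite sqrtr_gt0; lra.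
by have := le0_ger_powR (ltW q_lt0) sqrtGa_gt0 grad_ge; rewrite Ga_pow; lra.
Qed.

Lemma exists_lap_grad_le0 (p : R) : 1 < m ->
  (p + q = m - 1 /\ 0 <= p /\ 0 < q) \/ (p + q = m - 1 /\ q < 0 /\ m < 3) ->
  exists t sg, [/\ 1 < t, 0 < sg, sg <= 1/8 & lap_ratio m t sg + grad_ratio t sg `^ q <= 0].
Proof.
move=> m_gt1 [[pq [p_ge0 q_gt0]] | [_ [q_lt0 m_lt3]]].
  exact: exists_lap_grad_le0_q_gt0 pq p_ge0 q_gt0.
exact: exists_lap_grad_le0_q_lt0 m_gt1 q_lt0 m_lt3.
Qed.

End RatioBounds.

Unset Implicit Arguments.

Theorem mainTheorem12 (R : realType) (N : nat) (m p q : R) :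
  (2 <= N)%N -> 1 < m ->
  ((p + q = m - 1 /\ 0 <= p /\ 0 < q) \/ (p + q = m - 1 /\ q < 0 /\ m < 3)) ->
  exists lam : R, 0 < lam /\
  exists mu : seq nat -> seq nat -> R,
    [/\ is_weight N mu,
        (exists c C : R, 0 < c /\ 0 < C /\
           forall n : nat, (2 <= n)%N ->
             c * expR (lam * n%:R) <= Wo N mu n /\
             Wo N mu n <= C * expR (lam * n%:R))
      & exists u : seq nat -> R, nontriv_pos_sol N mu m p q u].
Proof.
move=> N_gt1 m_gt1 cases; have pq : p + q = m - 1 by case: cases => -[].
have [t [sg [t_gt1 sg_gt0 sg_le ratio_le0]]] := exists_lap_grad_le0 m_gt1 cases.
have N1_ge1 : (1 : R) <= N.-1%:R by rewrite ler1n -ltnS prednK // ltnW.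
have N_le : (N%:R : R) <= 2 * N.-1%:R by rewrite -natrM ler_nat; lia.
set s := sg / N.-1%:R.
have s_gt0 : 0 < s by rewrite divr_gt0 //; lra.
have sgE : N.-1%:R * s = sg by rewrite mulrC divfK // gt_eqF //; lra.
have s_small : 2 * N%:R * s <= 1 by have := ler_wpM2r (ltW s_gt0) N_le; nra.
have s_inv_gt1 : 1 < s^-1 by rewrite invf_gt1 //; nra.
exists (ln s^-1); split; first by rewrite ln_gt0.
exists (horo_weight N s); split.
- exact: horo_weight_is_weight.
- exists s^-1, (4 * s^-1); split; first lra.
  split => [|n _]; first lra.
  rewrite expRM_natr lnK ?posrE ?invr_gt0 // -!mulrA -!exprS.
  exact/andP/Wo_horo_weight_bounds.
- exists (horo_power t); apply: horo_power_solution => //.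
  by rewrite sgE.
Qed.
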